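(* Let $\sigma>0$, let $K_G\in\mathbb{R}^{m\times m}$ be a symmetric positive semidefinite matrix, let $W\in\mathbb{R}^{n\times m}$, and let $\mathbf{y}\in\mathbb{R}^n$. For every $\mathbf{x}\in\mathbb{R}^d$ let $\mathbf{w}_{\mathbf{x}}\in\mathbb{R}^m$ be a given vector. Define $\tilde K_X = W K_G W^T$, $\tilde{\mathbf{z}} = (\tilde K_X+\sigma^2 I)^{-1}\mathbf{y}$, $\tilde{\mathbf{k}}_{\mathbf{x}} = W K_G \mathbf{w}_{\mathbf{x}}$ (the SKI quantities), and $\bar{\mathbf{z}} = (K_G W^TW+\sigma^2 I)^{-1}K_G W^T\mathbf{y}$, $\bar C = \sigma^2 (K_GW^TW+\sigma^2 I)^{-1}K_G$ (the GSGP quantities). Then for all $\mathbf{x},\mathbf{x}'\in\mathbb{R}^d$: (i) (mean) $\mathbf{w}_{\mathbf{x}}^T K_G W^T\tilde{\mathbf{z}} = \mathbf{w}_{\mathbf{x}}^T\bar{\mathbf{z}}$; (ii) (covariance) $\mathbf{w}_{\mathbf{x}}^T K_G\mathbf{w}_{\mathbf{x}'} - \tilde{\mathbf{k}}_{\mathbf{x}}^T(\tilde K_X+\sigma^2 I)^{-1}\tilde{\mathbf{k}}_{\mathbf{x}'} = \mathbf{w}_{\mathbf{x}}^T\bar C\,\mathbf{w}_{\mathbf{x}'}$; (iii) (log likelihood) $-\tfrac12\big[\log\det(\tilde K_X+\sigma^2 I)+\mathbf{y}^T\tilde{\mathbf{z}}+n\log(2\pi)\big] = -\tfrac12\big[\log\det(K_GW^TW+\sigma^2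 I)+\tfrac{\mathbf{y}^T(\mathbf{y}-W\bar{\mathbf{z}})}{\sigma^2}+c\big]$, where $c = n\log(2\pi)+(n-m)\log\sigma^2$. In words: the SKI approximate inference expressions for posterior mean, posterior covariance and log likelihood coincide with the exact grid-structured GP (GSGP) inference expressions.
   Context: Setting: Gaussian process regression with data $\mathbf{x}_1,\dots,\mathbf{x}_n\in\mathbb{R}^d$, responses $\mathbf{y}\in\mathbb{R}^n$ and noise variance $\sigma^2$. $G=\{\mathbf{g}_1,\dots,\mathbf{g}_m\}\subseteq\mathbb{R}^d$ is a set of grid points, $k$ a positive-definite kernel, and $K_G=[k(\mathbf{g}_i,\mathbf{g}_j)]_{i,j}$. For $\mathbf{x}\in\mathbb{R}^d$, $\mathbf{w}_{\mathbf{x}}\in\mathbb{R}^m$ is a vector of interpolation weights from the grid to $\mathbf{x}$, and $W\in\mathbb{R}^{n\times m}$ has $i$-th row $\mathbf{w}_{\mathbf{x}_i}^T$. The SKI approximation replaces the kernel matrix by $WK_GW^T$; the grid-structured GP is $\boldsymbol\theta\sim\mathcal N(0,K_G)$, $f(\mathbf{x})=\mathbf{w}_{\mathbf{x}}^T\boldsymbol\theta$, observed with i.i.d. $\mathcal N(0,\sigma^2)$ noise; $\bar{\mathbf z}$ and $\bar C$ are the posterior mean and covariance of $\boldsymbol\theta$. *)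

From mathcomp Require Import all_boot all_order all_algebra.
From mathcomp Require Import all_classical all_reals all_analysis.
Set Implicit Arguments. Unset Strict Implicit. Unset Printing Implicit Defensive.
Import Order.TTheory GRing.Theory Num.Theory.
Local Open Scope ring_scope.

Definition psd_mx (R : realType) (m : nat) (K : 'M[R]_m) : Prop :=
  K^T = K /\ forall v : 'cV[R]_m, 0 <= (v^T *m K *m v) 0 0.

Definition scal (R : realType) (A : 'M[R]_1) : R := A 0 0.

From mathcomp Require Import all_boot all_order all_algebra.
From mathcomp Require Import all_classical all_reals all_analysis.
Import Order.TTheory GRing.Theory Num.Theory.
Local Open Scope ring_scope.
From mathcomp Require Import polyrcf ring.

(* With P := K_G W^T, the SKI matrix is A = W P + sigma^2 I and the GSGP matrix
   is B = P W + sigma^2 I.  The push-through identity B^-1 P = P A^-1 turns the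
   GSGP mean and covariance into the SKI ones, and Sylvester's determinant
   identity sigma^(2n) det B = sigma^(2m) det A accounts for the constant c in
   the log likelihood.  Both determinants are positive because W K_G W^T is
   positive semidefinite. *)

Lemma horner_char_poly (R : comNzRingType) n (A : 'M[R]_n) (x : R) :
  (char_poly A).[x] = \det (x%:M - A).
Proof.
rewrite /char_poly -[_.[x]]/(horner_eval x _) -det_map_mx; congr (\det _).
apply/matrixP => i j; rewrite !mxE /= /horner_eval.
by rewrite hornerD hornerN hornerC hornerMn hornerX.
Qed.

Lemma det_sylvester (R : comNzRingType) m n (P : 'M[R]_(m, n)) (Q : 'M[R]_(n, m))
    (s : R) :
  s ^+ n * \det (P *m Q + s%:M) = s ^+ m * \det (Q *m P + s%:M).
Proof.
pose Z := block_mx (s%:M : 'M[R]_m) (- P) Q (1%:M : 'M[R]_n).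
have ZPQ : block_mx 1%:M P 0 1%:M *m Z = block_mx (P *m Q + s%:M) 0 Q 1%:M.
  by rewrite mulmx_block !mul1mx !mul0mx !add0r mulmx1 addrC addNr.
have ZQP :
    block_mx 1%:M 0 (- Q) s%:M *m Z = block_mx s%:M (- P) 0 (Q *m P + s%:M).
  rewrite mulmx_block !mul1mx !mul0mx !addr0 mulmx1.
  by rewrite mul_mx_scalar mul_scalar_mx scalerN addNr mulNmx mulmxN opprK.
move: (congr1 determinant ZPQ) (congr1 determinant ZQP).
rewrite !det_mulmx det_ublock det_lblock det_ublock det_lblock !det1 !det_scalar.
by rewrite !mul1r mulr1 => <- <-.
Qed.

Section ShiftedInverse.

Variables (R : comUnitRingType) (m n : nat) (s : R).

Lemma mulVmx_shift (M : 'M[R]_n) : M + s%:M \in unitmx ->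
  invmx (M + s%:M) *m M = 1%:M - s *: invmx (M + s%:M).
Proof.
by move=> unitM; rewrite -(mulVmx unitM) mulmxDr mul_mx_scalar addrK.
Qed.

Lemma mulmxV_shift (M : 'M[R]_n) : M + s%:M \in unitmx ->
  M *m invmx (M + s%:M) = 1%:M - s *: invmx (M + s%:M).
Proof.
by move=> unitM; rewrite -(mulmxV unitM) mulmxDl mul_scalar_mx addrK.
Qed.

Lemma invmx_push_through (P : 'M[R]_(m, n)) (Q : 'M[R]_(n, m)) :
    P *m Q + s%:M \in unitmx -> Q *m P + s%:M \in unitmx ->
  invmx (P *m Q + s%:M) *m P = P *m invmx (Q *m P + s%:M).
Proof.
move=> unitPQ unitQP.
have shiftP : (P *m Q + s%:M) *m P = P *m (Q *m P + s%:M).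
  by rewrite mulmxDl mulmxDr mul_scalar_mx mul_mx_scalar mulmxA.
by rewrite -[LHS](mulmxK unitQP) -(mulmxA _ P) -shiftP mulKmx.
Qed.

End ShiftedInverse.

Section PositiveDeterminant.

Variable R : rcfType.

Lemma trmx_mul_self_gt0 n (v : 'cV[R]_n) : v != 0 -> 0 < (v^T *m v) 0 0.
Proof.
move=> v_neq0.
have sqr_ge0 i : 0 <= v^T 0 i * v i 0 by rewrite mxE -expr2 sqr_ge0.
rewrite mxE lt0r sumr_ge0 ?andbT //; apply: contra v_neq0 => /eqP sum0.
apply/eqP/colP => i; rewrite mxE.
have /eqP := psumr_eq0P (fun j _ => sqr_ge0 j) sum0 (i := i) isT.
by rewrite mxE mulf_eq0 orbb => /eqP.
Qed.

Lemma psd_conj_form m n (K : 'M[R]_m) (W : 'M[R]_(n, m)) :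
  (forall v : 'cV[R]_m, 0 <= (v^T *m K *m v) 0 0) ->
  forall v : 'cV[R]_n, 0 <= (v^T *m (W *m K *m W^T) *m v) 0 0.
Proof.
by move=> K_psd v; have := K_psd (W^T *m v); rewrite trmx_mul trmxK !mulmxA.
Qed.

Variables (n : nat) (N : 'M[R]_n).
Hypothesis N_psd : forall v : 'cV[R]_n, 0 <= (v^T *m N *m v) 0 0.

Lemma det_psd_shift_neq0 (x : R) : 0 < x -> \det (x%:M + N) != 0.
Proof.
move=> x_gt0; apply/det0P => -[v v_neq0 vxN0].
have : 0 < ((v^T)^T *m (x%:M + N) *m v^T) 0 0.
  rewrite mulmxDr mulmxDl mul_mx_scalar -scalemxAl mxE [X in X + _]mxE.
  by rewrite ltr_wpDr ?N_psd // mulr_gt0 ?trmx_mul_self_gt0 ?trmx_eq0.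
by rewrite trmxK vxN0 mul0mx mxE ltxx.
Qed.

(* [y |-> det (y I + N)] is the monic characteristic polynomial of [- N], and it
   has no root on [[x, +oo[]; hence it is positive at [x]. *)
Lemma det_psd_shift_gt0 (x : R) : 0 < x -> 0 < \det (x%:M + N).
Proof.
move=> x_gt0.
have detE y : \det (y%:M + N) = (char_poly (- N)).[y].
  by rewrite horner_char_poly opprK.
have no_root : {in `[x, +oo[, forall y, ~~ root (char_poly (- N)) y}.
  move=> y; rewrite in_itv /= andbT => x_le_y; rewrite /root -detE.
  exact/det_psd_shift_neq0/(lt_le_trans x_gt0).
have /(_ x) := sgp_pinftyP no_root; rewrite in_itv /= lexx => /(_ isT) /eqP.
by rewrite /sgp_pinfty (monicP (char_poly_monic _)) sgr1 -detE sgr_cp0.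
Qed.

End PositiveDeterminant.

Section SylvesterLn.

Variables (R : realType) (m n : nat) (s : R).
Variables (P : 'M[R]_(m, n)) (Q : 'M[R]_(n, m)).
Hypotheses (s_gt0 : 0 < s) (detQP_gt0 : 0 < \det (Q *m P + s%:M)).

Lemma det_sylvester_gt0 : 0 < \det (P *m Q + s%:M).
Proof.
by rewrite -(pmulr_rgt0 _ (exprn_gt0 n s_gt0)) det_sylvester mulr_gt0 ?exprn_gt0.
Qed.

Lemma ln_det_sylvester :
  ln (\det (Q *m P + s%:M)) = ln (\det (P *m Q + s%:M)) + (n%:R - m%:R) * ln s.
Proof.
have lnE := congr1 (@ln R) (@det_sylvester R m n P Q s).
rewrite !lnM ?posrE ?exprn_gt0 ?det_sylvester_gt0 // !lnXn // in lnE.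
rewrite -!(mulr_natl (ln s)) in lnE.
by rewrite -[LHS](addKr (m%:R * ln s)) -lnE mulrBl; ring.
Qed.

End SylvesterLn.

Lemma scalB (R : realType) (M N : 'M[R]_1) : scal (M - N) = scal M - scal N.
Proof. by rewrite /scal !mxE. Qed.

Lemma scalZ (R : realType) (a : R) (M : 'M[R]_1) : scal (a *: M) = a * scal M.
Proof. by rewrite /scal mxE. Qed.

Theorem theorem1 (R : realType) (n m d : nat) (sigma : R) (KG : 'M[R]_m)
  (W : 'M[R]_(n, m)) (y : 'cV[R]_n) (w : 'rV[R]_d -> 'cV[R]_m) :
  0 < sigma -> psd_mx KG ->
  let KX := W *m KG *m W^T in
  let A := KX + sigma ^+ 2 *: 1%:M in
  let zt := invmx A *m y in
  let kt := fun x => W *m KG *m w x in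
  let B := KG *m W^T *m W + sigma ^+ 2 *: 1%:M in
  let zb := invmx B *m KG *m W^T *m y in
  let Cb := sigma ^+ 2 *: (invmx B *m KG) in
  forall x x' : 'rV[R]_d,
    scal ((w x)^T *m KG *m W^T *m zt) = scal ((w x)^T *m zb)
    /\ scal ((w x)^T *m KG *m w x') - scal ((kt x)^T *m invmx A *m kt x')
       = scal ((w x)^T *m Cb *m w x')
    /\ - (1 / 2) * (ln (\det A) + scal (y^T *m zt) + n%:R * ln (2 * pi))
       = - (1 / 2) * (ln (\det B) + scal (y^T *m (y - W *m zb)) / sigma ^+ 2
                      + (n%:R * ln (2 * pi) + (n%:R - m%:R) * ln (sigma ^+ 2))).
Proof.
move=> sigma_gt0 [KG_sym KG_psd] KX A zt kt B zb Cb x x'.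
set s := sigma ^+ 2; set P := KG *m W^T.
have s_gt0 : 0 < s by exact: exprn_gt0.
have AE : A = W *m P + s%:M by rewrite /A /KX scalemx1 mulmxA.
have BE : B = P *m W + s%:M by rewrite /B scalemx1.
have detA_gt0 : 0 < \det A.
  rewrite /A scalemx1 addrC; apply: det_psd_shift_gt0 s_gt0; exact: psd_conj_form.
have detB_gt0 : 0 < \det B by rewrite BE det_sylvester_gt0 -?AE.
have unitA : A \in unitmx by rewrite unitmxE unitfE gt_eqF.
have unitB : B \in unitmx by rewrite unitmxE unitfE gt_eqF.
have push : invmx B *m P = P *m invmx A.
  by rewrite AE BE invmx_push_through -?AE -?BE.
have zbE : zb = P *m zt by rewrite /zb /zt -(mulmxA _ KG) -/P push mulmxA.
split; first by rewrite zbE !mulmxA.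
split.
  have sandwich : P *m invmx A *m (W *m KG) = KG - Cb.
    rewrite -push mulmxA -(mulmxA _ P) BE mulVmx_shift -?BE //.
    by rewrite mulmxBl mul1mx -scalemxAl.
  have ktE z : (kt z)^T = (w z)^T *m P by rewrite /kt !trmx_mul KG_sym mulmxA.
  have quadE : (kt x)^T *m invmx A *m kt x' = (w x)^T *m (KG - Cb) *m w x'.
    by rewrite ktE /kt -sandwich !mulmxA.
  by rewrite quadE mulmxBr mulmxBl scalB opprB addrC subrK.
have WzbE : W *m zb = y - s *: zt.
  rewrite zbE /zt mulmxA mulmxA AE mulmxV_shift -?AE //.
  by rewrite mulmxBl mul1mx -scalemxAl.
have lndetE : ln (\det A) = ln (\det B) + (n%:R - m%:R) * ln s.
  by rewrite AE BE ln_det_sylvester -?AE.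
rewrite WzbE subKr -scalemxAr scalZ [s * _]mulrC mulfK ?gt_eqF // lndetE.
ring.
Qed.
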